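(* Let $\mu=(\mu_1\geq\mu_2\geq\dots\geq\mu_k>\mu_{k+1}=0)$ be a partition, let $\bar{\mu}=(\bar\mu_1\ge\bar\mu_2\ge\cdots)$ be its conjugate partition, and let $y$ be an indeterminate. Then for every integer $\ell$ with $1\le \ell\le \mu_1$, $$ \frac{1}{\mu_1+y}\prod_{1\le i\le\bar{\mu}_{\ell}}\frac{\mu_i-i+1+y}{\mu_i-i+y}=\frac{1}{\ell-\bar{\mu}_{\ell}-1+y}\prod_{\ell\le j\le \mu_1}\frac{j-\bar{\mu}_j-1+y}{j-\bar{\mu}_j+y}$$ as rational functions in $y$.
   Context: For a partition $\mu$, the conjugate partition $\bar\mu$ is defined by: $\bar{\mu}_j$ is the number of indices $i$ with $\mu_i\ge j$ (the number of nodes in column $j$ of the Young diagram of $\mu$). *)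

From mathcomp Require Import all_boot all_order all_algebra.
From mathcomp Require Export fraction.
Set Implicit Arguments. Unset Strict Implicit. Unset Printing Implicit Defensive.

Definition is_partition (mu : seq nat) : bool :=
  sorted geq mu && (0 \notin mu).

(* 1-indexed part mu_i (equal to 0 for i > k). *)
Definition part (mu : seq nat) (i : nat) : nat := nth 0 mu i.-1.

Definition conj_part (mu : seq nat) (j : nat) : nat :=
  count (fun m => j <= m) mu.

Definition ratfun := {fraction {poly rat}}.
Definition yvar : ratfun := tofrac ('X : {poly rat}).

From mathcomp Require Import all_boot all_order all_algebra.
From mathcomp Require Import fraction.
From mathcomp Require Import ring zify.
Import GRing.Theory.
Local Open Scope ring_scope.

(* Write F(a) := a + y and let mu' be the conjugate partition.  Passing from l + 1
   to l adds one column factor on the right, and on the left the rows with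
   mu_i = l, i.e. mu'_(l+1) < i <= mu'_l; along them mu_i - i drops by one at
   each step, so they telescope to F(l - mu'_(l+1))/F(l - mu'_l), which is what
   the new column factor and the change of prefactor require.  Descending
   induction from l = mu_1 + 1, where both products are empty, proves the
   identity with cleared denominators; all that is used about y is that -y is
   not an integer. *)

Lemma leq_nth_count (s : seq nat) (i j : nat) : sorted geq s -> (0 < j)%N ->
  (j <= nth 0 s i)%N = (i < count (leq j) s)%N.
Proof.
elim: s i => [|x s IHs] i /= s_sorted j_gt0; first by rewrite nth_nil ltn0 leqNgt j_gt0.
have s_sorted' : sorted geq s := path_sorted s_sorted.
have x_ge_s : all (geq x) s.
  by apply: order_path_min s_sorted => a b c /= ba cb; apply: leq_trans cb ba.
have [j_le_x | x_lt_j] := leqP j x.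
  by case: i => [|i] /=; rewrite ?j_le_x add1n ?ltnS ?IHs.
have count_s : count (leq j) s = 0%N.
  apply/eqP; rewrite eqn0Ngt -has_count; apply/hasPn => y y_in_s.
  by rewrite -ltnNge (leq_ltn_trans (allP x_ge_s y y_in_s)).
by case: i => [|i] /=; rewrite count_s; [rewrite leqNgt x_lt_j | rewrite IHs ?count_s].
Qed.

Section ConjugatePartition.

Variable mu : seq nat.
Hypothesis mu_partition : is_partition mu.

Lemma leq_part_conj (i j : nat) : (0 < i)%N -> (0 < j)%N ->
  (j <= part mu i)%N = (i <= conj_part mu j)%N.
Proof.
case/andP: mu_partition => mu_sorted _ i_gt0 j_gt0.
by rewrite /part leq_nth_count // prednK.
Qed.

Lemma conj_part_leS (l : nat) : (conj_part mu l.+1 <= conj_part mu l)%N.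
Proof. by apply: sub_count => m /ltnW. Qed.

Lemma conj_part_gt_first_part : conj_part mu (part mu 1).+1 = 0%N.
Proof. by apply/eqP; rewrite -leqn0 leqNgt -leq_part_conj ?ltnn. Qed.

Lemma part_eq_conj_part_range (l i : nat) : (0 < l)%N ->
  (conj_part mu l.+1 < i <= conj_part mu l)%N -> part mu i = l.
Proof.
move=> l_gt0 /andP[lt_i le_i]; have i_gt0 : (0 < i)%N by apply: leq_ltn_trans lt_i.
by apply/eqP; rewrite eqn_leq leqNgt leq_part_conj // -ltnNge lt_i leq_part_conj.
Qed.

End ConjugatePartition.

Lemma telescope_prodf (K : fieldType) (m n : nat) (g : nat -> K) :
  (m <= n)%N -> (forall k, g k != 0) ->
  \prod_(m <= k < n) (g k / g k.+1) = g m / g n.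
Proof.
move=> le_mn g_neq0; rewrite (telescope_big (fun i j => g i / g j)).
  by case: ltnP => [//|le_nm]; rewrite (@anti_leq n m) ?le_mn ?le_nm // divff.
by move=> k _ /=; rewrite mulrA divfK.
Qed.

Section HookProducts.

Variables (K : fieldType) (y : K).
Hypothesis y_generic : forall a b : nat, a%:R - b%:R + y != 0.
Variable mu : seq nat.
Hypothesis mu_partition : is_partition mu.

Definition row_ratio_prod (l : nat) : K :=
  \prod_(1 <= i < (conj_part mu l).+1)
     (((part mu i)%:R - i%:R + 1 + y) / ((part mu i)%:R - i%:R + y)).

Definition col_ratio_prod (l : nat) : K :=
  \prod_(l <= j < (part mu 1).+1)
     ((j%:R - (conj_part mu j)%:R - 1 + y) / (j%:R - (conj_part mu j)%:R + y)).

Lemma row_ratio_prodS (l : nat) : (0 < l)%N ->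
  row_ratio_prod l = row_ratio_prod l.+1 *
    ((l%:R - (conj_part mu l.+1)%:R + y) / (l%:R - (conj_part mu l)%:R + y)).
Proof.
move=> l_gt0; rewrite /row_ratio_prod (big_cat_nat _ (n := (conj_part mu l.+1).+1)) //=;
  last exact: conj_part_leS.
congr (_ * _).
pose g k := l.+1%:R - k%:R + y.
rewrite (eq_big_nat _ _ (F2 := fun i => g i / g i.+1)).
  rewrite telescope_prodf ?ltnS ?conj_part_leS //; last by move=> k; apply: y_generic.
  by congr (_ * _^-1); rewrite /g; ring.
move=> i /andP[lt_i le_i]; rewrite (@part_eq_conj_part_range mu mu_partition l i l_gt0);
  last by rewrite lt_i -ltnS.
by congr (_ * _^-1); rewrite /g; ring.
Qed.

Lemma col_ratio_prodS (l : nat) : (l <= part mu 1)%N ->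
  col_ratio_prod l = (l%:R - (conj_part mu l)%:R - 1 + y) /
    (l%:R - (conj_part mu l)%:R + y) * col_ratio_prod l.+1.
Proof. by move=> le_l; rewrite /col_ratio_prod big_ltn. Qed.

Lemma row_col_ratio_prod (l : nat) : (0 < l <= (part mu 1).+1)%N ->
  row_ratio_prod l * (l%:R - (conj_part mu l)%:R - 1 + y) =
  ((part mu 1)%:R + y) * col_ratio_prod l.
Proof.
move=> /andP[l_gt0 le_l]; move Ek : ((part mu 1).+1 - l)%N => k.
elim: k l l_gt0 le_l Ek => [|k IHk] l l_gt0 le_l Ek.
  have -> : l = (part mu 1).+1 by lia.
  rewrite /row_ratio_prod /col_ratio_prod conj_part_gt_first_part // !big_geq //.
  by rewrite mul1r mulr1; ring.
have l_le_first : (l <= part mu 1)%N by lia.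
have IH : row_ratio_prod l.+1 * (l%:R - (conj_part mu l.+1)%:R + y) =
          ((part mu 1)%:R + y) * col_ratio_prod l.+1.
  by rewrite -IHk ?ltnS //; [congr (_ * _); ring | lia].
rewrite row_ratio_prodS // col_ratio_prodS // -!mulrA mulrA IH; ring.
Qed.

Lemma hook_ratio_identity (l : nat) : (1 <= l <= part mu 1)%N ->
  ((part mu 1)%:R + y)^-1 * row_ratio_prod l =
  (l%:R - (conj_part mu l)%:R - 1 + y)^-1 * col_ratio_prod l.
Proof.
move=> /andP[l_gt0 le_l].
have first_neq0 : (part mu 1)%:R + y != 0 by have := y_generic (part mu 1) 0; rewrite subr0.
have hook_neq0 : l%:R - (conj_part mu l)%:R - 1 + y != 0.
  by have := y_generic l (conj_part mu l).+1; congr (_ != 0); ring.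
rewrite -[row_ratio_prod l](mulfK hook_neq0) row_col_ratio_prod ?l_gt0 ?leqW //.
by field; rewrite first_neq0 hook_neq0.
Qed.

End HookProducts.

Lemma yvar_generic (a b : nat) : a%:R - b%:R + yvar != 0.
Proof.
have -> : (a%:R - b%:R : ratfun) = (a%:Z - b%:Z)%:~R by rewrite intrB.
rewrite /yvar -(rmorph_int (@tofrac _)) -tofracD tofrac_eq0 addrC.
by rewrite -(rmorph_int (@polyC _)) -size_poly_eq0 size_XaddC.
Qed.

Theorem lemma2p7 (mu : seq nat) (l : nat) :
  is_partition mu ->
  (1 <= l <= part mu 1)%N ->
  (((part mu 1)%:R + yvar)^-1 *
     \prod_(1 <= i < (conj_part mu l).+1)
        (((part mu i)%:R - i%:R + 1 + yvar) / ((part mu i)%:R - i%:R + yvar))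
   : ratfun)
  =
  (l%:R - (conj_part mu l)%:R - 1 + yvar)^-1 *
     \prod_(l <= j < (part mu 1).+1)
        ((j%:R - (conj_part mu j)%:R - 1 + yvar) / (j%:R - (conj_part mu j)%:R + yvar)).
Proof. by move=> mu_partition; apply: hook_ratio_identity _ _ yvar_generic _ mu_partition l. Qed.
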